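(* Let $V$ be a finite-dimensional vector space over a field with basis $B=\{v_1,\dots,v_N\}$, and let $S$ be a (possibly infinite) set of pairwise commuting endomorphisms of $V$ such that: (a) for each $T\in S$, after reordering $B$, the matrix of $T$ with respect to $B$ is in Jordan canonical form; (b) for each $T\in S$, every Jordan block of size greater than $1$ has eigenvalue $0$. Let $B'\subset B$ be the set of basis vectors that are (genuine, not merely generalized) eigenvectors of every $T\in S$, and assume that distinct elements of $B'$ are distinguished by their $S$-eigenvalues, i.e.\ for $v_i\neq v_j$ in $B'$ there is $T\in S$ whose eigenvalues on $v_i$ and $v_j$ differ. Let $W\subset V$ be a subspace preserved by every $T\in S$. Then $W\neq0$ if and only if $W$ contains some element of $B'$. *)

(* Conventions: V = 'rV[F]_N (row vectors), basis B = the standard basis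
   e_i := delta_mx 0 i.  An endomorphism T of V is represented by a matrix
   A : 'M[F]_N acting on the right, T v = v *m A.  Hence T e_i = row i of A,
   and the matrix of T with respect to B (columns = coordinates of the
   images of the basis vectors) is A^T.  Subspaces of V are row spaces of
   matrices (mxalgebra). *)
From mathcomp Require Import all_boot all_order all_algebra all_fingroup.
Set Implicit Arguments. Unset Strict Implicit. Unset Printing Implicit Defensive.
Import GRing.Theory.
Local Open Scope ring_scope.

Definition basis_vec (F : fieldType) (N : nat) (i : 'I_N) : 'rV[F]_N :=
  delta_mx 0 i.

Definition mat_of_endo (F : fieldType) (N : nat) (A : 'M[F]_N) : 'M[F]_N := A^T.

Definition reorder (F : fieldType) (N : nat) (s : 'S_N) (M : 'M[F]_N)
  : 'M[F]_N := \matrix_(i, j) M (s i) (s j).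

(* Blocks are
   the maximal runs of consecutive indices linked by superdiagonal 1's. *)
Definition is_jordan_form (F : fieldType) (N : nat) (M : 'M[F]_N) : Prop :=
  [/\ (forall i j : 'I_N, (j : nat) <> i -> (j : nat) <> i.+1 -> M i j = 0),
      (forall i j : 'I_N, (j : nat) = i.+1 -> M i j = 0 \/ M i j = 1) &
      (forall i j : 'I_N, (j : nat) = i.+1 -> M i j = 1 -> M i i = M j j)].

Definition big_blocks_nilpotent (F : fieldType) (N : nat) (M : 'M[F]_N) : Prop :=
  forall i j : 'I_N, (j : nat) = i.+1 -> M i j = 1 -> M i i = 0.

Definition eigvec_with (F : fieldType) (N : nat) (A : 'M[F]_N) (v : 'rV[F]_N)
  (c : F) : Prop := v != 0 /\ v *m A = c *: v.

Definition is_eigvec (F : fieldType) (N : nat) (A : 'M[F]_N) (v : 'rV[F]_N) : Prop :=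
  exists c, eigvec_with A v c.

Definition in_Bprime (F : fieldType) (N : nat) (S : 'M[F]_N -> Prop) (i : 'I_N)
  : Prop := forall A, S A -> is_eigvec A (basis_vec F i).

From mathcomp Require Import all_boot all_order all_algebra all_fingroup.
From Stdlib Require Import Classical.
Set Implicit Arguments. Unset Strict Implicit. Unset Printing Implicit Defensive.
Import GRing.Theory.
Local Open Scope ring_scope.

(* The argument has three parts.
   1. An endomorphism that is triangular in some ordering of the basis has an
      eigenvector in each of its nonzero invariant subspaces; a matrix in
      Jordan form is such.
   2. A commuting family with this property has a common eigenvector in every
      nonzero invariant subspace W: by induction on the rank, either every
      member acts as a scalar on W, or W meets an eigenspace of some member
      in a smaller invariant subspace.
   3. For A in Jordan form, every basis vector in the support of an
      eigenvector u of A is itself an eigenvector with u's eigenvalue.  So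
      the support of a common eigenvector u lies in B', and since S
      separates B' this support is a single e_k; thus e_k is a multiple of u
      and lies in W. *)

Definition eig_in_stable (F : fieldType) (N : nat) (A : 'M[F]_N) : Prop :=
  forall U : 'M[F]_N, (U *m A <= U)%MS -> U != 0 ->
  exists c, (U :&: eigenspace A c)%MS != 0.

(* Part 1: triangular endomorphisms.  Here reorder s A is lower triangular,
   i.e. A maps e_(s i) into the span of the e_(s j) with j <= i. *)
Section Triangular.
Variables (F : fieldType) (N : nat) (s : 'S_N) (A : 'M[F]_N).
Hypothesis trigA : is_trig_mx (reorder s A).

Lemma trig_coord (u : 'rV[F]_N) (i : 'I_N) :
    (forall j : 'I_N, (i < j)%N -> u 0 (s j) = 0) ->
  (u *m A) 0 (s i) = A (s i) (s i) * u 0 (s i).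
Proof.
move=> u_hi; rewrite mxE (reindex_inj (@perm_inj _ s)) (bigD1 i) //= big1.
  by rewrite addr0 mulrC.
move=> j ne_ji; have [lt_ji|lt_ij|eq_ji] := ltngtP j i.
- by have := elimT is_trig_mxP trigA j i lt_ji; rewrite mxE => ->; rewrite mulr0.
- by rewrite (u_hi _ lt_ij) mul0r.
- by move/val_inj: eq_ji ne_ji => ->; rewrite eqxx.
Qed.

(* descending elimination: replacing u by u *m A - a_ii *: u keeps u in U and
   kills the last coordinate, until u becomes an eigenvector *)
Lemma trig_eig_in_stable : eig_in_stable A.
Proof.
move=> U stU /rowV0Pn[u0 u0U nz_u0].
suff: forall m (u : 'rV[F]_N), (u <= U)%MS -> u != 0 ->
    (forall j : 'I_N, (m <= j)%N -> u 0 (s j) = 0) ->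
  exists c, (U :&: eigenspace A c)%MS != 0.
  by move=> /(_ N u0 u0U nz_u0); apply => j; rewrite leqNgt ltn_ord.
elim=> [|m IHm] u uU nz_u u_hi.
  case/negP: nz_u; apply/eqP/rowP => k; rewrite mxE -(permKV s k).
  exact: u_hi.
have [le_Nm|lt_mN] := leqP N m.
  apply: (IHm u) => // j le_mj.
  by move: (leq_trans le_Nm le_mj); rewrite leqNgt ltn_ord.
pose a := A (s (Ordinal lt_mN)) (s (Ordinal lt_mN)).
pose v := u *m A - a *: u.
have [v0|nz_v] := eqVneq v 0.
  exists a; apply/rowV0Pn; exists u => //.
  by rewrite sub_capmx uU; apply/eigenspaceP/eqP; rewrite -subr_eq0 -/v v0.
apply: (IHm v) => //.
  by rewrite addmx_sub ?(submx_trans (submxMr _ uU)) // -scaleNr scalemx_sub.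
move=> j le_mj; have -> : v 0 (s j) = (u *m A) 0 (s j) - a * u 0 (s j).
  by rewrite /v [u *m A]lock !mxE -lock.
rewrite trig_coord; last first.
  by move=> k lt_jk; apply: u_hi; apply: leq_trans lt_jk.
have [eq_mj|lt_mj] := eqVneq (m : nat) j.
  have -> : j = Ordinal lt_mN by apply: val_inj; rewrite /= eq_mj.
  by rewrite -/a mulrC subrr.
by rewrite u_hi ?mulr0 ?subrr // ltn_neqAle lt_mj le_mj.
Qed.

End Triangular.

Lemma eigenspace_stable (F : fieldType) (N : nat) (A B U : 'M[F]_N) (c : F) :
  A *m B = B *m A -> (U *m B <= U)%MS ->
  ((U :&: eigenspace A c) *m B <= U :&: eigenspace A c)%MS.
Proof.
move=> AB_BA stU; rewrite sub_capmx (submx_trans (submxMr _ (capmxSl _ _))) //.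
apply/eigenspaceP; rewrite -mulmxA -AB_BA mulmxA.
by have /eigenspaceP -> := capmxSr U (eigenspace A c); rewrite scalemxAl.
Qed.

Section CommonEigenvector.
Variables (F : fieldType) (N : nat) (S : 'M[F]_N -> Prop).
Hypothesis S_comm : forall A B, S A -> S B -> A *m B = B *m A.
Hypothesis S_eig : forall A, S A -> eig_in_stable A.

Lemma common_eigvec (U : 'M[F]_N) : U != 0 -> (forall A, S A -> (U *m A <= U)%MS) ->
  exists2 u : 'rV[F]_N, (u <= U)%MS &
    u != 0 /\ forall A, S A -> exists c, u *m A = c *: u.
Proof.
have [r] := ubnP (\rank U); elim: r U => // r IHr U rankU nzU stU.
have [[A [SA not_scalar]]|all_scalar] :=
  classic (exists A, S A /\ forall c, ~ (U <= eigenspace A c)%MS).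
  have [c nzUc] := S_eig SA (stU A SA) nzU.
  have UcU : (U :&: eigenspace A c <= U)%MS by apply: capmxSl.
  have ltUcU : (U :&: eigenspace A c < U)%MS.
    rewrite ltmxE UcU /=; apply: contra_notN (not_scalar c).
    by move/submx_trans; apply; apply: capmxSr.
  have [u uUc eig_u] : exists2 u : 'rV[F]_N, (u <= U :&: eigenspace A c)%MS &
      u != 0 /\ forall B, S B -> exists c, u *m B = c *: u.
    apply: IHr => // [|B SB]; last exact: eigenspace_stable (S_comm SA SB) (stU B SB).
    by rewrite -ltnS (leq_trans _ rankU) // ltnS rank_ltmx.
  by exists u => //; apply: submx_trans uUc UcU.
have /rowV0Pn[u uU nz_u] := nzU.
exists u => //; split=> // A SA.
have [c Uc] : exists c, (U <= eigenspace A c)%MS.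
  apply: NNPP => no_c; apply: all_scalar; exists A; split=> // c Uc.
  by apply: no_c; exists c.
by exists c; apply/eigenspaceP; apply: submx_trans uU Uc.
Qed.

End CommonEigenvector.

Section JordanEigenvectors.
Variables (F : fieldType) (N : nat) (s : 'S_N) (A : 'M[F]_N).
Let J := reorder s (mat_of_endo A).
Hypothesis jordanJ : is_jordan_form J.

Lemma jordan_entry i j : J i j = A (s j) (s i).
Proof. by rewrite /J /reorder /mat_of_endo !mxE. Qed.

(* J is upper triangular, i.e. its transpose reorder s A is lower triangular *)
Lemma jordan_trig : is_trig_mx (reorder s A).
Proof.
apply/is_trig_mxP => i j lt_ij; rewrite mxE -jordan_entry.
have [offdiag _ _] := jordanJ.
apply: offdiag => [|eq_iSj]; first by apply/eqP; rewrite ltn_eqF.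
by move: lt_ij; rewrite eq_iSj ltnNge leqnSn.
Qed.

Lemma jordan_coord (u : 'rV[F]_N) (i : 'I_N) :
  (u *m A) 0 (s i) =
    J i i * u 0 (s i) + \sum_(j : 'I_N | j == i.+1 :> nat) J i j * u 0 (s j).
Proof.
rewrite mxE (reindex_inj (@perm_inj _ s)) (bigD1 i) //= mulrC jordan_entry.
congr (_ + _); rewrite (bigID (fun j : 'I_N => j == i.+1 :> nat)) /=.
rewrite [X in _ + X]big1 ?addr0 => [|j /andP[ne_ji ne_jSi]]; last first.
  case: jordanJ => offdiag _ _; rewrite -jordan_entry offdiag ?mulr0 //.
  - by move/val_inj=> eq_ji; rewrite eq_ji eqxx in ne_ji.
  - exact/eqP.
apply: eq_big => [j|j _]; last by rewrite jordan_entry mulrC.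
by case: (eqVneq j i) => [->|//]; rewrite (ltn_eqF (ltnSn i)).
Qed.

Lemma jordan_basis_eig (i : 'I_N) (c : F) : J i i = c ->
    (forall h : 'I_N, i = h.+1 :> nat -> J h i = 0) ->
  basis_vec F (s i) *m A = c *: basis_vec F (s i).
Proof.
case: jordanJ => offdiag _ _ Jii superdiag; apply/rowP => k.
rewrite -(permKV s k); set p := (s^-1 k)%g.
rewrite /basis_vec -rowE !mxE -jordan_entry (inj_eq (@perm_inj _ s)).
have [<-|ne_ip] := eqVneq i p; first by rewrite mulr1.
rewrite mulr0; have [eq_iSp|ne_iSp] := eqVneq (i : nat) p.+1; first exact: superdiag.
by apply: offdiag; [move/val_inj=> eq_ip; rewrite eq_ip eqxx in ne_ip|apply/eqP].
Qed.

Variables (u : 'rV[F]_N) (c : F).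
Hypothesis u_eig : u *m A = c *: u.

Let coord_eig (i : 'I_N) : (u *m A) 0 (s i) = c * u 0 (s i).
Proof. by rewrite u_eig mxE. Qed.

(* along a Jordan chain, a superdiagonal 1 feeding a coordinate of u with
   the right eigenvalue would break the eigen-equation one step earlier *)
Lemma jordan_eig_superdiag (h j : 'I_N) : j = h.+1 :> nat ->
  u 0 (s j) != 0 -> J j j = c -> J h j = 0.
Proof.
move=> eq_jSh nz_j Jjj; have [_ superdiag chain] := jordanJ.
have [//|Jhj] := superdiag h j eq_jSh.
have := coord_eig h; rewrite jordan_coord (big_pred1 j) => [|k]; last first.
  by rewrite /= -eq_jSh val_eqE.
rewrite Jhj mul1r (chain h j eq_jSh Jhj) Jjj => /eqP.
by rewrite -[X in _ == X]addr0 (inj_eq (addrI _)) (negbTE nz_j).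
Qed.

Lemma jordan_eig_diag (i : 'I_N) : u 0 (s i) != 0 -> J i i = c.
Proof.
have [n] := ubnP (N - i); elim: n i => // n IHn i lt_n nz_i.
have := coord_eig i; rewrite jordan_coord big1 ?addr0 => [|j /eqP eq_jSi].
  by move/(mulIf nz_i).
have [->|nz_j] := eqVneq (u 0 (s j)) 0; first by rewrite mulr0.
rewrite (jordan_eig_superdiag eq_jSi nz_j) ?mul0r //.
apply: IHn nz_j; rewrite ltnS in lt_n; apply: leq_trans lt_n; rewrite eq_jSi.
exact: ltn_sub2l (ltn_ord i) (ltnSn i).
Qed.

Lemma jordan_eigvec_support (k : 'I_N) : u 0 k != 0 ->
  basis_vec F k *m A = c *: basis_vec F k.
Proof.
rewrite -(permKV s k) => nz_k; apply: jordan_basis_eig.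
  exact: jordan_eig_diag.
move=> h eq_kSh; apply: jordan_eig_superdiag => //; exact: jordan_eig_diag.
Qed.

End JordanEigenvectors.

Lemma basis_vec_neq0 (F : fieldType) (N : nat) (k : 'I_N) : basis_vec F k != 0.
Proof. by apply/rV0Pn; exists k; rewrite mxE !eqxx oner_eq0. Qed.

Lemma basis_eigval_uniq (F : fieldType) (N : nat) (A : 'M[F]_N) (k : 'I_N) (a b : F) :
  eigvec_with A (basis_vec F k) a -> basis_vec F k *m A = b *: basis_vec F k -> a = b.
Proof.
move=> [_ ->] /(congr1 (fun v : 'rV[F]_N => v 0 k)).
by rewrite !mxE !eqxx !mulr1.
Qed.

Lemma supported_at (F : fieldType) (N : nat) (u : 'rV[F]_N) (k : 'I_N) :
  (forall j, j != k -> u 0 j = 0) -> u = u 0 k *: basis_vec F k.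
Proof.
move=> supp; rewrite {1}[u]row_sum_delta (bigD1 k) //= big1 ?addr0 // => j ne_jk.
by rewrite supp ?scale0r.
Qed.

Section CommonJordan.
Variables (F : fieldType) (N : nat) (S : 'M[F]_N -> Prop).
Hypothesis S_jordan : forall A, S A ->
  exists s : 'S_N, is_jordan_form (reorder s (mat_of_endo A)).

Lemma jordan_eig_in_stable A : S A -> eig_in_stable A.
Proof.
by move=> SA; have [s J] := S_jordan SA; apply: trig_eig_in_stable (jordan_trig J).
Qed.

Variable u : 'rV[F]_N.
Hypothesis u_eig : forall A, S A -> exists c, u *m A = c *: u.

Lemma common_eigvec_support A c k : S A -> u *m A = c *: u -> u 0 k != 0 ->
  basis_vec F k *m A = c *: basis_vec F k.
Proof.
move=> SA uA nz_k; have [s J] := S_jordan SA.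
exact: (jordan_eigvec_support J uA nz_k).
Qed.

Lemma common_eigvec_Bprime k : u 0 k != 0 -> in_Bprime S k.
Proof.
move=> nz_k A SA; have [c uA] := u_eig SA.
by exists c; split; [exact: basis_vec_neq0 | exact: common_eigvec_support uA nz_k].
Qed.

Hypothesis S_sep : forall i j : 'I_N, in_Bprime S i -> in_Bprime S j -> i != j ->
  exists A, [/\ S A & exists ci cj, [/\ eigvec_with A (basis_vec F i) ci,
                                        eigvec_with A (basis_vec F j) cj &
                                        ci != cj]].

Lemma common_eigvec_basis : u != 0 ->
  exists k, [/\ in_Bprime S k, u 0 k != 0 & u = u 0 k *: basis_vec F k].
Proof.
case/rV0Pn=> k nz_k; exists k; split=> //; first exact: common_eigvec_Bprime.
apply: supported_at => j ne_jk; apply/eqP/idPn => nz_j.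
have [A [SA [ci [ck [ej ek]]]]] :=
  S_sep (common_eigvec_Bprime nz_j) (common_eigvec_Bprime nz_k) ne_jk.
have [c uA] := u_eig SA.
rewrite (basis_eigval_uniq ej (common_eigvec_support SA uA nz_j)).
by rewrite (basis_eigval_uniq ek (common_eigvec_support SA uA nz_k)) eqxx.
Qed.

End CommonJordan.

Theorem lemma5p2 (F : fieldType) (N : nat) (S : 'M[F]_N -> Prop)
  (Hcomm : forall A B, S A -> S B -> A *m B = B *m A)
  (Hjordan : forall A, S A -> exists s : 'S_N,
      is_jordan_form (reorder s (mat_of_endo A)) /\
      big_blocks_nilpotent (reorder s (mat_of_endo A)))
  (Hsep : forall i j : 'I_N, in_Bprime S i -> in_Bprime S j -> i != j ->
      exists A, [/\ S A & exists ci cj, [/\ eigvec_with A (basis_vec F i) ci,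
                                              eigvec_with A (basis_vec F j) cj &
                                              ci != cj]])
  (W : 'M[F]_N)
  (HW : forall A, S A -> (W *m A <= W)%MS) :
  W != 0 <-> exists i : 'I_N, in_Bprime S i /\ (basis_vec F i <= W)%MS.
Proof.
have S_jordan A : S A -> exists s : 'S_N, is_jordan_form (reorder s (mat_of_endo A)).
  by move=> SA; have [s [J _]] := Hjordan A SA; exists s.
split=> [nzW|[k [_ ekW]]]; last first.
  by apply: contraTneq ekW => ->; rewrite submx0 basis_vec_neq0.
have [u uW [nz_u u_eig]] :=
  common_eigvec Hcomm (jordan_eig_in_stable S_jordan) nzW HW.
have [k [Bk nz_k u_k]] := common_eigvec_basis S_jordan u_eig Hsep nz_u.
exists k; split=> //.
by rewrite -(scalerK nz_k (basis_vec F k)) -u_k scalemx_sub.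
Qed.
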